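(* Let $\sqrt{2} = (1.b_1 b_2 b_3 \cdots)_2$ be the binary expansion of $\sqrt 2$ and $b = b_1 b_2 b_3 \cdots$ the infinite binary word of its fractional digits. For integers $n \geq 2$, let $L_n(x) = \left\lfloor \frac{x(2^n - x)}{2^{n-2}} \right\rfloor$ for $x \in X_n = \{1, 2, \dots, 2^n - 1\}$, and call $n$ undesirable if there exists $x \in X_n$ with $L_n(x) = 2^{n-1}$. Let $d_N$ be the number of undesirable parameters $n$ with $2 \le n \leq N$. Then $$\liminf_{N \to \infty} \frac{d_N}{N} \geq \frac{5 r_{\inf}(b) - 2}{3} \quad\text{and}\quad \limsup_{N \to \infty} \frac{d_N}{N} \geq \frac{5 r_{\sup}(b) - 2}{3},$$ where $r_{\inf}(b) = \liminf_{n\to\infty} |Z(b^{(n)})|/n$ and $r_{\sup}(b) = \limsup_{n\to\infty} |Z(b^{(n)})|/n$. In particular, if $r_{\sup}(b) > 2/5$, then there are infinitely many undesirable parameters.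
   Context: For a binary word $w = w_1 w_2 \cdots$, $w^{(n)}$ denotes its initial subword of length $n$, and $Z(w)$ is the set of indices $i$ with $w_i = 0$; thus $|Z(b^{(n)})|$ is the number of zeros among $b_1, \dots, b_n$. *)

From HB Require Import structures.
From mathcomp Require Import all_boot all_order all_algebra.
From mathcomp Require Import all_classical all_reals all_analysis.
Set Implicit Arguments. Unset Strict Implicit. Unset Printing Implicit Defensive.
Import Order.TTheory GRing.Theory Num.Theory.
Local Open Scope ring_scope.

(* k-th binary digit (k >= 1) of sqrt 2 after the binary point:
   b_k = floor(2^k * sqrt 2) mod 2. *)
Definition sqrt2_digit (R : realType) (k : nat) : int :=
  ((Num.floor (Num.sqrt (2 : R) * 2 ^+ k)) %% 2)%Z.

Definition zeros_prefix (R : realType) (n : nat) : nat :=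
  count (fun k => sqrt2_digit R k == 0) (iota 1 n).

Definition undesirable (n : nat) : bool :=
  [exists x : 'I_(2 ^ n), (0 < x)%N &&
     ((x * (2 ^ n - x)) %/ 2 ^ (n - 2) == 2 ^ (n - 1))%N].

Definition d_count (N : nat) : nat :=
  count undesirable (index_iota 2 N.+1).

Definition r_inf (R : realType) : R :=
  limn_inf (fun n : nat => (zeros_prefix R n)%:R / n%:R : R).
Definition r_sup (R : realType) : R :=
  limn_sup (fun n : nat => (zeros_prefix R n)%:R / n%:R : R).

From HB Require Import structures.
From mathcomp Require Import all_boot all_order all_algebra.
From mathcomp Require Import all_classical all_reals all_analysis.
From mathcomp Require Import zify ring lra.
Set Implicit Arguments. Unset Strict Implicit. Unset Printing Implicit Defensive.
Import Order.TTheory GRing.Theory Num.Theory numFieldNormedType.Exports.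
Local Open Scope ring_scope.

(* Let f_k be the fractional part of 2^k sqrt 2, i.e. the binary fraction
   0.b_{k+1} b_{k+2} ..., and y = floor (2^k sqrt 2).  Then x = 2^(k+1) - y
   satisfies x (2^(k+2) - x) = 2^(2k+2) - y^2, and
   2^(2k+1) - y^2 = f_k (2^(k+1) sqrt 2 - f_k) lies in [0, 2^k) as soon as
   2 sqrt 2 f_k < 1; then x witnesses that k + 2 is undesirable.  This holds
   when the digits after position k start with 00, 0100 or 01010, since then
   f_k < 11/32.  A potential-function argument shows that among the first N
   positions at least (5 Z - 2 N - O(1)) / 3 start such a prefix, where Z is the
   number of zeros among b_1 ... b_N; dividing by N and passing to lim inf and
   lim sup gives the bounds, and the last claim follows because d_N / N -> 0
   when there are only finitely many undesirable parameters. *)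

(* [z i] flags a zero digit at position [i]; [small_prefix z i] says that the
   digits from position [i] on start with 00, 0100 or 01010, i.e. that the
   binary fraction they form is below 11/32. *)
Definition small_prefix (z : nat -> bool) (i : nat) : bool :=
  z i && (z i.+1 || z i.+2 && (z i.+3 || z i.+4)).

Section BinaryDigits.
Variables (R : realType) (a : R).

Definition scaled_floor (k : nat) : int := Num.floor (a * 2 ^+ k).
Definition scaled_frac (k : nat) : R := a * 2 ^+ k - (scaled_floor k)%:~R.
Definition binary_digit (k : nat) : int := (scaled_floor k %% 2)%Z.

Lemma scaled_frac_ge0 k : 0 <= scaled_frac k.
Proof. by rewrite subr_ge0 floor_le. Qed.

Lemma scaled_frac_lt1 k : scaled_frac k < 1.
Proof. by have := floorD1_gt (a * 2 ^+ k); rewrite /scaled_frac intrD; lra. Qed.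

Lemma floor_mul2 (x : R) : Num.floor (x * 2) = Num.floor x * 2 + (Num.floor (x * 2) %% 2)%Z.
Proof.
have lo : Num.floor x * 2 <= Num.floor (x * 2).
  by rewrite floor_ge_int intrM ler_pM2r ?floor_le.
have hi : Num.floor (x * 2) < Num.floor x * 2 + 2.
  rewrite floor_lt_int (_ : _ * 2 + 2 = (Num.floor x + 1) * 2) ?intrM; last by ring.
  by rewrite ltr_pM2r // floorD1_gt.
lia.
Qed.

Lemma scaled_floorS k : scaled_floor k.+1 = scaled_floor k * 2 + binary_digit k.+1.
Proof. by rewrite /binary_digit /scaled_floor exprSr mulrA {1}floor_mul2. Qed.

Lemma scaled_frac_half k :
  scaled_frac k = (scaled_frac k.+1 + (binary_digit k.+1 != 0)%:R) / 2.
Proof.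
have digit01 : (binary_digit k.+1)%:~R = (binary_digit k.+1 != 0)%:R :> R.
  have := modz_ge0 (scaled_floor k.+1) (isT : (2 : int) != 0).
  have := ltz_pmod (scaled_floor k.+1) (isT : (0 : int) < 2).
  rewrite /binary_digit; case: eqP => [->|] //= d_neq0 lt2 ge0.
  by have -> : (scaled_floor k.+1 %% 2)%Z = 1 by lia.
rewrite /scaled_frac scaled_floorS intrD intrM digit01 exprSr.
by field.
Qed.

Lemma scaled_frac_lt_of_small_prefix k :
  small_prefix (fun i => binary_digit i == 0) k.+1 -> scaled_frac k < 11 / 32.
Proof.
rewrite (scaled_frac_half k) (scaled_frac_half k.+1) (scaled_frac_half k.+2).
rewrite (scaled_frac_half k.+3) (scaled_frac_half k.+4) /small_prefix.
have := scaled_frac_ge0 k.+4.+1; have := scaled_frac_lt1 k.+4.+1.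
by do 5 case: (_ == 0); rewrite /=; lra.
Qed.

End BinaryDigits.

Lemma undesirable_of_sqrt2_approx k y :
  (y * y <= 2 * (2 ^ k * 2 ^ k) < y * y + 2 ^ k)%N -> undesirable k.+2.
Proof.
set q := (2 ^ k)%N => /andP[y2_le y2_gt].
have q_gt0 : (0 < q)%N by rewrite expn_gt0.
have y_lt : (y < 2 * q)%N by nia.
have pow_k2 : (2 ^ k.+2 = 4 * q)%N by rewrite !expnS mulnA.
have x_lt : (2 * q - y < 2 ^ k.+2)%N by lia.
apply/existsP; exists (Ordinal x_lt) => /=.
have -> : (k.+2 - 2 = k)%N by lia.
have -> : (k.+2 - 1 = k.+1)%N by lia.
rewrite pow_k2 -/q expnS (_ : 4 * q - (2 * q - y) = 2 * q + y)%N; last by lia.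
apply/andP; split; first by lia.
rewrite eqn_leq leq_divRL // -ltnS ltn_divLR //; apply/andP; split; nia.
Qed.

Section Sqrt2.
Variable R : realType.
Let s := Num.sqrt (2 : R).
Let s_ge0 : 0 <= s. Proof. exact: sqrtr_ge0. Qed.
Let s_sqr : s * s = 2. Proof. by rewrite -expr2 sqr_sqrtr. Qed.

Lemma undesirable_of_small_frac k : 2 * s * scaled_frac s k < 1 -> undesirable k.+2.
Proof.
move=> frac_small.
have frac_ge0 := scaled_frac_ge0 s k.
have floor_ge0 : 0 <= scaled_floor s k by rewrite floor_ge0 mulr_ge0 // exprn_ge0.
set y := `|scaled_floor s k|%N.
have y_def : y%:R = (scaled_floor s k)%:~R :> R by rewrite natr_absz ger0_norm.
move: frac_small frac_ge0; rewrite /scaled_frac -y_def.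
set Q : R := 2 ^+ k; set f := s * Q - y%:R => frac_small frac_ge0.
have Q_gt0 : 0 < Q by rewrite exprn_gt0.
have y_ge0 : (0 : R) <= y%:R by [].
have gap : 2 * (Q * Q) - y%:R * y%:R = f * (2 * s * Q - f).
  by rewrite -[in LHS]s_sqr /f; ring.
have gap_ge0 : 0 <= f * (2 * s * Q - f).
  by apply: mulr_ge0 => //; have := s_ge0; rewrite /f; nra.
have gap_lt : f * (2 * s * Q - f) < Q.
  have : 2 * s * f * Q < 1 * Q by rewrite ltr_pM2r.
  nra.
apply: (@undesirable_of_sqrt2_approx _ y); rewrite -(ler_nat R) -(ltr_nat R).
by rewrite !natrD !natrM natrX -/Q; apply/andP; split; lra.
Qed.

Lemma undesirable_of_small_prefix k :
  small_prefix (fun i => sqrt2_digit R i == 0) k.+1 -> undesirable k.+2.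
Proof.
move=> /scaled_frac_lt_of_small_prefix frac_lt; apply: undesirable_of_small_frac.
by have := scaled_frac_ge0 s k; have := s_ge0; have := s_sqr; nra.
Qed.

End Sqrt2.

Section PrefixCounting.
Variable z : nat -> bool.

(* Amortization weight of the digits at positions [i], [i+1], ...: a zero digit
   costs 5, every position earns 2, a small prefix earns 3, and the weight
   absorbs the difference. *)
Definition prefix_weight (i : nat) : nat :=
  if z i then (if z i.+1 || z i.+2 then 4 else 3)
  else if z i.+1 then (if z i.+2 || z i.+3 then 2 else 1) else 0.

Lemma prefix_weight_le4 i : (prefix_weight i <= 4)%N.
Proof. by rewrite /prefix_weight; do 4 case: (z _). Qed.

Lemma weight_step i :
  (5 * z i + prefix_weight i.+1 <= 3 * small_prefix z i + 2 + prefix_weight i)%N.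
Proof. by rewrite /prefix_weight /small_prefix; do 5 case: (z _). Qed.

Lemma count_weight m n :
  (5 * count z (iota m n) + prefix_weight (m + n)
     <= 3 * count (small_prefix z) (iota m n) + 2 * n + prefix_weight m)%N.
Proof.
elim: n m => [|n IHn] m /=; first by rewrite addn0.
by have := IHn m.+1; have := weight_step m; rewrite addSnnS; lia.
Qed.

Lemma count_zeros_le m n :
  (5 * count z (iota m n) <= 3 * count (small_prefix z) (iota m n) + 2 * n + 4)%N.
Proof. by have := count_weight m n; have := prefix_weight_le4 m; lia. Qed.

End PrefixCounting.

Lemma five_zeros_prefix_le (R : realType) N :
  (5 * zeros_prefix R N <= 3 * d_count N + 2 * N + 9)%N.
Proof.
set z := fun i => sqrt2_digit R i == 0.
have small_le : (count (small_prefix z) (iota 1 N.-1) <= d_count N)%N.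
  rewrite /d_count /index_iota (_ : N.+1 - 2 = N.-1)%N; last by lia.
  rewrite -[2%N]/(1 + 1)%N iotaDl -[1%N]/(1 + 0)%N iotaDl !count_map.
  by apply: sub_count => i /=; exact: undesirable_of_small_prefix.
have zeros_le : (zeros_prefix R N <= count z (iota 1 N.-1) + 1)%N.
  rewrite /zeros_prefix -/z; case: N {small_le} => [|N] //.
  rewrite -{1}[N.+1]addn1 iotaD count_cat /= addn0.
  by have := leq_b1 (z (1 + N)); lia.
by have := count_zeros_le z 1 N.-1; lia.
Qed.

Local Open Scope classical_set_scope.

Section AffineLowerBound.
Variables (R : realType) (u v e : R ^nat) (a c : R).
Hypotheses (u_lb : has_lbound (range u)) (u_ub : has_ubound (range u)).
Hypotheses (v_lb : has_lbound (range v)) (v_ub : has_ubound (range v)).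
Hypotheses (a_gt0 : 0 < a) (e_noninc : nonincreasing_seq e) (e_cvg0 : e @ \oo --> 0).
Hypothesis uv : forall n, a * u n + c <= v n + e n.

Let sdrop_neq0 (w : R ^nat) m : sdrop w m !=set0.
Proof. by exists (w m); exists m => /=. Qed.

Let affine_cvg (w : R ^nat) l : w @ \oo --> l ->
  (fun m => a * w m + c - e m) @ \oo --> a * l + c.
Proof.
move=> wl; rewrite -[a * l + c]subr0.
by apply: cvgB => //; apply: cvgD; [exact: cvgMl_tmp | exact: cvg_cst].
Qed.

Lemma limn_inf_affine_le : a * limn_inf u + c <= limn_inf v.
Proof.
have infs_le m : a * infs u m + c - e m <= infs v m.
  apply: lb_le_inf; first exact: sdrop_neq0.
  move=> _ [n /= mn <-].
  have infs_u : infs u m <= u n by apply: ge_inf; [exact: has_lbound_sdrop | exists n].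
  have := uv n; have := e_noninc mn; have := ler_wpM2l (ltW a_gt0) infs_u; lra.
have cvg_infs_u := cvg_infs_sup u_ub u_lb.
have cvg_infs_v := cvg_infs_sup v_ub v_lb.
rewrite /limn_inf (cvg_lim _ cvg_infs_u) // (cvg_lim _ cvg_infs_v) //.
by apply: ler_cvg_to (affine_cvg cvg_infs_u) cvg_infs_v _; apply: nearW.
Qed.

Lemma limn_sup_affine_le : a * limn_sup u + c <= limn_sup v.
Proof.
have sups_le m : a * sups u m + c - e m <= sups v m.
  have : sups u m <= (sups v m + e m - c) / a.
    apply: ge_sup; first exact: sdrop_neq0.
    move=> _ [n /= mn <-]; rewrite ler_pdivlMr //.
    have sups_v : v n <= sups v m by apply: ub_le_sup; [exact: has_ubound_sdrop | exists n].
    have := uv n; have := e_noninc mn; lra.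
  rewrite ler_pdivlMr //; lra.
have cvg_sups_u := cvg_sups_inf u_ub u_lb.
have cvg_sups_v := cvg_sups_inf v_ub v_lb.
rewrite /limn_sup (cvg_lim _ cvg_sups_u) // (cvg_lim _ cvg_sups_v) //.
by apply: ler_cvg_to (affine_cvg cvg_sups_u) cvg_sups_v _; apply: nearW.
Qed.

End AffineLowerBound.

Lemma harmonic_nonincreasing (R : realType) : nonincreasing_seq (@harmonic R).
Proof. by move=> m n mn; rewrite /= lef_pV2 ?posrE // ler_nat. Qed.

Lemma ratio_bounds (R : realType) (f : nat -> nat) : (forall N, (f N <= N)%N) ->
  has_lbound (range (fun N => (f N)%:R / N%:R : R)) /\
  has_ubound (range (fun N => (f N)%:R / N%:R : R)).
Proof.
move=> f_le; split; [exists 0 | exists 1] => _ [N _ <-]; first exact: divr_ge0.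
case: N (f_le N) => [|N] fN; first by rewrite invr0 mulr0.
by rewrite ler_pdivrMr ?ltr0n // mul1r ler_nat.
Qed.

Lemma ratio_affine_le (R : realType) (Z D N : nat) :
  (5 * Z <= 3 * D + 2 * N + 9)%N ->
  5 / 3 * (Z%:R / N%:R) + (- 2 / 3) <= D%:R / N%:R + 6 * harmonic N :> R.
Proof.
case: N => [|N] /=; first by rewrite !invr0 !mulr0 invr1 mulr1; lra.
rewrite -(ler_nat R) !natrD !natrM => bound.
set n : R := N.+1%:R; have n_ge1 : 1 <= n by rewrite ler1n.
rewrite -subr_ge0 (_ : _ - _ =
  ((n + 1) * (3 * D%:R - 5 * Z%:R + 2 * n) + 18 * n) / (3 * n * (n + 1))).
  by apply: divr_ge0; nra.
by field; apply/andP; split; lra.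
Qed.

Lemma zeros_prefix_le (R : realType) N : (zeros_prefix R N <= N)%N.
Proof. by rewrite /zeros_prefix (leq_trans (count_size _ _)) // size_iota. Qed.

Lemma d_count_le N : (d_count N <= N)%N.
Proof. by rewrite /d_count (leq_trans (count_size _ _)) // size_iota; lia. Qed.

Lemma d_count_le_of_finite m : (forall n, (m <= n)%N -> ~~ undesirable n) ->
  forall N, (d_count N <= m)%N.
Proof.
move=> none N; rewrite /d_count.
apply: (@leq_trans (count (fun n => n < m)%N (index_iota 2 N.+1))).
  by apply: sub_count => n /=; apply: contraLR; rewrite -leqNgt => /none.
rewrite -size_filter -[m in (_ <= m)%N](size_iota 0 m) uniq_leq_size //.
  by rewrite filter_uniq // iota_uniq.
by move=> x; rewrite mem_filter mem_iota => /andP[x_lt _].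
Qed.

Lemma limn_sup_bounded_ratio (R : realType) (f : nat -> nat) m :
  (forall N, (f N <= m)%N) -> limn_sup (fun N => (f N)%:R / N%:R : R) = 0.
Proof.
move=> f_le; apply: (cvg_limn_inf_sup _).2; rewrite -cvg_shiftS.
apply: (@squeeze_cvgr _ _ _ _ (cst 0) (fun N => m%:R * harmonic N)).
- by apply: nearW => N /=; rewrite divr_ge0 // ler_wpM2r ?invr_ge0 // ler_nat.
- exact: cvg_cst.
- by rewrite -(mulr0 m%:R); apply: cvgMl_tmp; exact: cvg_harmonic.
Qed.

Theorem theorem3p2 (R : realType) :
  (5 * r_inf R - 2) / 3 <= limn_inf (fun N : nat => (d_count N)%:R / N%:R : R) /\
  (5 * r_sup R - 2) / 3 <= limn_sup (fun N : nat => (d_count N)%:R / N%:R : R) /\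
  (r_sup R > 2 / 5 -> forall m : nat, exists n : nat, (m <= n)%N /\ undesirable n).
Proof.
have [u_lb u_ub] := ratio_bounds R (zeros_prefix_le R).
have [v_lb v_ub] := ratio_bounds R d_count_le.
have a_gt0 : (0 : R) < 5 / 3 by [].
have e_cvg0 : (fun N => 6 * harmonic N) @ \oo --> (0 : R).
  by rewrite -(mulr0 6); apply: cvgMl_tmp; exact: cvg_harmonic.
have e_noninc : nonincreasing_seq (fun N => 6 * harmonic N : R).
  by move=> m n mn; rewrite ler_pM2l // harmonic_nonincreasing.
have uv N := ratio_affine_le R (five_zeros_prefix_le R N).
have affine (x : R) : (5 * x - 2) / 3 = 5 / 3 * x + (- 2 / 3) by ring.
have inf_le := limn_inf_affine_le u_lb u_ub v_lb v_ub a_gt0 e_noninc e_cvg0 uv.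
have sup_le := limn_sup_affine_le u_lb u_ub v_lb v_ub a_gt0 e_noninc e_cvg0 uv.
rewrite /r_inf /r_sup !affine; split; [exact: inf_le | split; [exact: sup_le|]].
move=> r_gt m; apply: contrapT => none.
have finite n : (m <= n)%N -> ~~ undesirable n.
  by move=> mn; apply/negP => und; apply: none; exists n.
by move: sup_le; rewrite (limn_sup_bounded_ratio R (d_count_le_of_finite finite)); lra.
Qed.
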